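(* Let $D\subset\mathbb{R}^2$ be a domain and $v\colon D\to\mathbb{R}^2$ a diffeomorphism onto its image. Let $s,\mu,\theta\colon[0,\infty)\to\mathbb{R}$ be $C^2$ functions satisfying $$\cosh^2(s(t))\,\mu'(t)-\sinh^2(s(t))\,\theta'(t)=\text{constant},$$ and let $A(t)=\psi(s(t),\mu(t),\theta(t))$, where $$\psi(s,\mu,\theta)=\cosh(s)\begin{pmatrix}\cos\mu&-\sin\mu\\ \sin\mu&\cos\mu\end{pmatrix}+\sinh(s)\begin{pmatrix}\cos\theta&\sin\theta\\ \sin\theta&-\cos\theta\end{pmatrix}.$$ Then $\varphi(t,\alpha)=A(t)v(\alpha)$ is a solution of the Lagrangian incompressible Euler problem on $D$.
   Context: Primes denote derivatives with respect to $t$. Note $\psi$ takes values in $\mathbb{SL}(2)$ (real $2\times2$ matrices of determinant $1$). For $\varphi(t,\alpha)=\varphi^t(\alpha)$, $d\varphi^t$ is the Jacobian in $\alpha$. ''Solution of the Lagrangian incompressible Euler problem on $D$'' means: each $\varphi^t$ is a diffeomorphism of $D$ onto its image, $\det(d\varphi^t)=\det(d\varphi^0)\ne0$ for all $t\ge0$, and there is a scalar function $p(t,\alpha)$ with $(d\varphi^t)^T\varphi''+\nabla_\alpha p=0$. *)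

From Stdlib Require Import Reals.
Open Scope R_scope.

Definition dist2 (x y : R * R) : R :=
  Rmax (Rabs (fst x - fst y)) (Rabs (snd x - snd y)).

Definition open2 (U : R * R -> Prop) : Prop :=
  forall x, U x -> exists e, 0 < e /\ forall y, dist2 y x < e -> U y.

Definition connected2 (D : R * R -> Prop) : Prop :=
  forall U V : R * R -> Prop, open2 U -> open2 V ->
    (forall x, D x -> U x \/ V x) ->
    (exists x, D x /\ U x) -> (exists x, D x /\ V x) ->
    exists x, D x /\ U x /\ V x.

Definition domain2 (D : R * R -> Prop) : Prop :=
  (exists x, D x) /\ open2 D /\ connected2 D.

Definition partial1 (f : R * R -> R) (x : R * R) (l : R) : Prop :=
  derivable_pt_lim (fun u => f (u, snd x)) (fst x) l.
Definition partial2 (f : R * R -> R) (x : R * R) (l : R) : Prop :=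
  derivable_pt_lim (fun u => f (fst x, u)) (snd x) l.

Definition cont2_on (U : R * R -> Prop) (f : R * R -> R) : Prop :=
  forall x, U x -> forall eps, 0 < eps -> exists delta, 0 < delta /\
    forall y, U y -> dist2 y x < delta -> Rabs (f y - f x) < eps.

Definition C1_on (U : R * R -> Prop) (f : R * R -> R) : Prop :=
  exists f1 f2 : R * R -> R,
    (forall x, U x -> partial1 f x (f1 x) /\ partial2 f x (f2 x)) /\
    cont2_on U f1 /\ cont2_on U f2.

Definition C1map_on (U : R * R -> Prop) (f : R * R -> R * R) : Prop :=
  C1_on U (fun x => fst (f x)) /\ C1_on U (fun x => snd (f x)).

Definition image2 (D : R * R -> Prop) (f : R * R -> R * R) (y : R * R) : Prop :=
  exists x, D x /\ f x = y.

Definition diffeo_onto_image (D : R * R -> Prop) (f : R * R -> R * R) : Prop :=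
  open2 D /\ C1map_on D f /\
  (forall x y, D x -> D y -> f x = f y -> x = y) /\
  open2 (image2 D f) /\
  exists g : R * R -> R * R,
    (forall x, D x -> g (f x) = x) /\
    (forall y, image2 D f y -> D (g y) /\ f (g y) = y) /\
    C1map_on (image2 D f) g.

Definition hderiv (f f' : R -> R) : Prop :=
  forall t, 0 <= t -> forall eps, 0 < eps -> exists delta, 0 < delta /\
    forall h, h <> 0 -> 0 <= t + h -> Rabs h < delta ->
      Rabs ((f (t + h) - f t) / h - f' t) < eps.

Definition hcont (f : R -> R) : Prop :=
  forall t, 0 <= t -> forall eps, 0 < eps -> exists delta, 0 < delta /\
    forall u, 0 <= u -> Rabs (u - t) < delta -> Rabs (f u - f t) < eps.

Definition C2_half (f f1 f2 : R -> R) : Prop :=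
  hderiv f f1 /\ hderiv f1 f2 /\ hcont f2.

Record mat2 := Mat2 { m11 : R; m12 : R; m21 : R; m22 : R }.

Definition det2 (M : mat2) : R := m11 M * m22 M - m12 M * m21 M.

Definition mat2_add (M N : mat2) : mat2 :=
  Mat2 (m11 M + m11 N) (m12 M + m12 N) (m21 M + m21 N) (m22 M + m22 N).
Definition mat2_scal (a : R) (M : mat2) : mat2 :=
  Mat2 (a * m11 M) (a * m12 M) (a * m21 M) (a * m22 M).

Definition mat2_vec (M : mat2) (x : R * R) : R * R :=
  (m11 M * fst x + m12 M * snd x, m21 M * fst x + m22 M * snd x).

Definition mat2_tr (M : mat2) : mat2 := Mat2 (m11 M) (m21 M) (m12 M) (m22 M).

Definition rot (mu : R) : mat2 := Mat2 (cos mu) (- sin mu) (sin mu) (cos mu).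
Definition refl (th : R) : mat2 := Mat2 (cos th) (sin th) (sin th) (- cos th).

Definition psi (s mu th : R) : mat2 :=
  mat2_add (mat2_scal (cosh s) (rot mu)) (mat2_scal (sinh s) (refl th)).

Definition jacobian_at (f : R * R -> R * R) (x : R * R) (J : mat2) : Prop :=
  partial1 (fun y => fst (f y)) x (m11 J) /\ partial2 (fun y => fst (f y)) x (m12 J) /\
  partial1 (fun y => snd (f y)) x (m21 J) /\ partial2 (fun y => snd (f y)) x (m22 J).

(** Derivatives (Jacobian dphi^t, velocity phi',
   acceleration phi'') are unique when they exist, so they are existentially
   quantified witnesses here. *)
Definition lagrangian_euler_solution (D : R * R -> Prop) (phi : R -> R * R -> R * R) : Prop :=
  (forall t, 0 <= t -> diffeo_onto_image D (phi t)) /\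
  exists (J : R -> R * R -> mat2) (vel acc : R -> R * R -> R * R) (p : R -> R * R -> R),
    (forall t a, 0 <= t -> D a -> jacobian_at (phi t) a (J t a)) /\
    (forall t a, 0 <= t -> D a -> det2 (J t a) = det2 (J 0 a)) /\
    (forall a, D a -> det2 (J 0 a) <> 0) /\
    (forall a, D a ->
       hderiv (fun t => fst (phi t a)) (fun t => fst (vel t a)) /\
       hderiv (fun t => snd (phi t a)) (fun t => snd (vel t a)) /\
       hderiv (fun t => fst (vel t a)) (fun t => fst (acc t a)) /\
       hderiv (fun t => snd (vel t a)) (fun t => snd (acc t a))) /\
    (forall t a, 0 <= t -> D a ->
       exists g1 g2 : R,
         partial1 (p t) a g1 /\ partial2 (p t) a g2 /\
         fst (mat2_vec (mat2_tr (J t a)) (acc t a)) + g1 = 0 /\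
         snd (mat2_vec (mat2_tr (J t a)) (acc t a)) + g2 = 0).

(* Since det psi = 1, each phi^t = A(t) v is a
   diffeomorphism with Jacobian A(t) dv, of determinant det dv, and
   (dphi^t)^T phi'' = dv^T (A^T A'') v.  When S = A^T A'' is symmetric this is minus the
   gradient of p = -(1/2) v.(S v).  Symmetry comes from the constraint: a direct computation
   gives skew(A^T A') = 2 (cosh^2 s mu' - sinh^2 s th'), which is therefore constant, and
   since A'^T A' is symmetric the derivative of skew(A^T A') is skew(A^T A''). *)

From Stdlib Require Import Reals Lra Nsatz.
From Coquelicot Require Import Derive_2d.
Open Scope R_scope.

(** * 2x2 matrices *)

Definition mat2_mul (M N : mat2) : mat2 :=
  Mat2 (m11 M * m11 N + m12 M * m21 N) (m11 M * m12 N + m12 M * m22 N)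
       (m21 M * m11 N + m22 M * m21 N) (m21 M * m12 N + m22 M * m22 N).

Definition mat2_id : mat2 := Mat2 1 0 0 1.

Definition mat2_inv (M : mat2) : mat2 :=
  mat2_scal (/ det2 M) (Mat2 (m22 M) (- m12 M) (- m21 M) (m11 M)).

Definition skew (M : mat2) : R := m21 M - m12 M.

Lemma det2_mul M N : det2 (mat2_mul M N) = det2 M * det2 N.
Proof. unfold det2, mat2_mul; simpl; ring. Qed.

Lemma mat2_mul_id_r M : mat2_mul M mat2_id = M.
Proof. destruct M; unfold mat2_mul, mat2_id; simpl; f_equal; ring. Qed.

Lemma mat2_vec_inv_l M w : det2 M <> 0 -> mat2_vec (mat2_inv M) (mat2_vec M w) = w.
Proof.
  destruct M, w; unfold mat2_inv, mat2_scal, mat2_vec, det2; simpl; intros.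
  f_equal; field; trivial.
Qed.

Lemma mat2_vec_inv_r M w : det2 M <> 0 -> mat2_vec M (mat2_vec (mat2_inv M) w) = w.
Proof.
  destruct M, w; unfold mat2_inv, mat2_scal, mat2_vec, det2; simpl; intros.
  f_equal; field; trivial.
Qed.

Lemma mat2_vec_tr_mul A J B w :
  mat2_vec (mat2_tr (mat2_mul A J)) (mat2_vec B w) =
  mat2_vec (mat2_tr J) (mat2_vec (mat2_mul (mat2_tr A) B) w).
Proof. unfold mat2_vec, mat2_tr, mat2_mul; simpl; f_equal; ring. Qed.

Lemma cosh_sinh_sq x : cosh x * cosh x - sinh x * sinh x = 1.
Proof.
  unfold cosh, sinh. rewrite <- (exp_0), <- (Rplus_opp_r x), exp_plus. field.
Qed.

Lemma cos_sin_sq x : cos x * cos x + sin x * sin x = 1.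
Proof. pose proof (sin2_cos2 x). unfold Rsqr in *. lra. Qed.

Lemma det2_psi s mu th : det2 (psi s mu th) = 1.
Proof.
  pose proof (cosh_sinh_sq s). pose proof (cos_sin_sq mu). pose proof (cos_sin_sq th).
  unfold det2, psi, mat2_add, mat2_scal, rot, refl; simpl. nsatz.
Qed.

(* [drot] and [drefl] are the derivatives of [rot] and [refl]; [dpsi] is the derivative of
   [psi] along a curve with velocity [(s', mu', th')]. *)
Definition drot (mu : R) : mat2 := Mat2 (- sin mu) (- cos mu) (cos mu) (- sin mu).
Definition drefl (th : R) : mat2 := Mat2 (- sin th) (cos th) (cos th) (sin th).

Definition dpsi (s mu th s' mu' th' : R) : mat2 :=
  mat2_add
    (mat2_scal s' (mat2_add (mat2_scal (sinh s) (rot mu)) (mat2_scal (cosh s) (refl th))))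
    (mat2_add (mat2_scal (cosh s * mu') (drot mu)) (mat2_scal (sinh s * th') (drefl th))).

Lemma skew_psi_dpsi s mu th s' mu' th' :
  skew (mat2_mul (mat2_tr (psi s mu th)) (dpsi s mu th s' mu' th')) =
  2 * ((cosh s)^2 * mu' - (sinh s)^2 * th').
Proof.
  pose proof (cosh_sinh_sq s). pose proof (cos_sin_sq mu). pose proof (cos_sin_sq th).
  unfold skew, psi, dpsi, mat2_mul, mat2_tr, mat2_add, mat2_scal, rot, refl, drot, drefl;
    simpl. nsatz.
Qed.

(** * Derivatives on the half-line *)

Definition diff_quot (f : R -> R) (t h : R) : R := (f (t + h) - f t) / h.
Definition half_line_nbhd (t h : R) : Prop := h <> 0 /\ 0 <= t + h.

Lemma hderiv_limit f f' : hderiv f f' <->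
  forall t, 0 <= t -> limit1_in (diff_quot f t) (half_line_nbhd t) (f' t) 0.
Proof.
  split; intros H t Ht eps Heps; destruct (H t Ht eps Heps) as [d [Hd Hf]];
    exists d; split; trivial.
  - intros h [[Hh0 Hth] Hhd]; simpl in *; unfold R_dist in *.
    apply Hf; trivial. now rewrite Rminus_0_r in Hhd.
  - intros h Hh0 Hth Hhd. apply (Hf h). simpl; unfold R_dist.
    now rewrite Rminus_0_r.
Qed.

Lemma hderiv_continuous f f' t : hderiv f f' -> 0 <= t ->
  limit1_in (fun h => f (t + h)) (half_line_nbhd t) (f t) 0.
Proof.
  intros Hf Ht. rewrite hderiv_limit in Hf.
  apply limit1_ext with (fun h => f t + diff_quot f t h * h).
  - intros h [Hh _]. unfold diff_quot. now field.
  - pose proof (limit_plus _ _ _ _ _ 0 (limit_free (fun _ => f t) _ t 0)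
      (limit_mul _ _ _ _ _ _ (Hf t Ht) (lim_x (half_line_nbhd t) 0))) as L.
    now rewrite Rmult_0_r, Rplus_0_r in L.
Qed.

Lemma hderiv_const c : hderiv (fun _ => c) (fun _ => 0).
Proof.
  apply hderiv_limit; intros t _.
  apply limit1_ext with (fun _ => 0); [intros h [Hh _]; unfold diff_quot; now field|].
  exact (limit_free (fun _ => 0) _ t 0).
Qed.

Lemma hderiv_plus u u' w w' : hderiv u u' -> hderiv w w' ->
  hderiv (fun t => u t + w t) (fun t => u' t + w' t).
Proof.
  rewrite !hderiv_limit; intros Hu Hw t Ht.
  apply limit1_ext with (fun h => diff_quot u t h + diff_quot w t h).
  - intros h [Hh _]; unfold diff_quot; now field.
  - apply limit_plus; auto.
Qed.

Lemma hderiv_opp u u' : hderiv u u' -> hderiv (fun t => - u t) (fun t => - u' t).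
Proof.
  rewrite !hderiv_limit; intros Hu t Ht.
  apply limit1_ext with (fun h => - diff_quot u t h).
  - intros h [Hh _]; unfold diff_quot; now field.
  - apply limit_Ropp; auto.
Qed.

Lemma hderiv_mult u u' w w' : hderiv u u' -> hderiv w w' ->
  hderiv (fun t => u t * w t) (fun t => u' t * w t + u t * w' t).
Proof.
  intros Hu Hw. pose proof (fun t => hderiv_continuous w w' t Hw) as Cw.
  rewrite hderiv_limit in Hu, Hw |- *; intros t Ht.
  apply limit1_ext with
    (fun h => diff_quot u t h * w (t + h) + u t * diff_quot w t h).
  - intros h [Hh _]; unfold diff_quot; now field.
  - apply limit_plus; apply limit_mul; auto.
    exact (limit_free (fun _ => u t) _ t 0).
Qed.

(* Caratheodory's difference quotient: continuous at [y0] when [g'] is the derivative there. *)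
Definition slope (g g' : R -> R) (y0 y : R) : R :=
  if Req_EM_T y y0 then g' y0 else (g y - g y0) / (y - y0).

Lemma slope_limit g g' y0 : derivable_pt_lim g y0 (g' y0) ->
  limit1_in (slope g g' y0) (fun _ => True) (g' y0) y0.
Proof.
  intros Hg eps Heps. destruct (Hg eps Heps) as [d Hd].
  exists d; split; [apply cond_pos|].
  intros y [_ Hy]; simpl in *; unfold R_dist, slope in *.
  destruct (Req_EM_T y y0) as [->|Hne].
  - rewrite Rminus_diag, Rabs_R0; lra.
  - specialize (Hd (y - y0)). replace (y0 + (y - y0)) with y in Hd by ring.
    apply Hd; trivial. lra.
Qed.

Lemma hderiv_comp g g' f f' : (forall y, derivable_pt_lim g y (g' y)) ->
  hderiv f f' -> hderiv (fun t => g (f t)) (fun t => g' (f t) * f' t).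
Proof.
  intros Hg Hf. pose proof (fun t => hderiv_continuous f f' t Hf) as Cf.
  rewrite hderiv_limit in Hf |- *; intros t Ht.
  apply limit1_ext with (fun h => slope g g' (f t) (f (t + h)) * diff_quot f t h).
  - intros h [Hh _]; unfold slope, diff_quot.
    destruct (Req_EM_T (f (t + h)) (f t)) as [->|Hne]; field; lra.
  - apply limit_mul; auto.
    apply limit1_imp with (Dgf (half_line_nbhd t) (fun _ => True) (fun h => f (t + h))).
    + now split.
    + apply (limit_comp (fun h => f (t + h)) _ _ _ (f t) _ 0); auto using slope_limit.
Qed.

Lemma hderiv_unique f f1 f2 t : hderiv f f1 -> hderiv f f2 -> 0 <= t -> f1 t = f2 t.
Proof.
  rewrite !hderiv_limit; intros H1 H2 Ht.
  apply (single_limit (diff_quot f t) (half_line_nbhd t) _ _ 0); auto.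
  intros a Ha. exists (a / 2); repeat split; try lra.
  simpl; unfold R_dist. rewrite Rminus_0_r, Rabs_right; lra.
Qed.

Lemma hderiv_ext f f' g g' : (forall t, 0 <= t -> f t = g t /\ f' t = g' t) ->
  hderiv f f' -> hderiv g g'.
Proof.
  intros E Hf t Ht eps Heps. destruct (Hf t Ht eps Heps) as [d [Hd Hq]].
  exists d; split; trivial. intros h Hh Hth Hhd.
  destruct (E t Ht) as [<- <-]. destruct (E (t + h) Hth) as [<- _]. auto.
Qed.

Lemma hderiv_eq f f' g' : hderiv f f' -> (forall t, 0 <= t -> f' t = g' t) -> hderiv f g'.
Proof. intros Hf E. apply hderiv_ext with f f'; auto. Qed.

Lemma hderiv_minus u u' w w' : hderiv u u' -> hderiv w w' ->
  hderiv (fun t => u t - w t) (fun t => u' t - w' t).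
Proof. intros Hu Hw. exact (hderiv_plus _ _ _ _ Hu (hderiv_opp _ _ Hw)). Qed.

Ltac solve_hderiv :=
  match goal with
  | |- hderiv (fun _ => ?c) _ => apply (hderiv_const c)
  | |- hderiv _ _ => eassumption
  | |- hderiv (fun t => @?u t + @?w t) _ => eapply (hderiv_plus u _ w _); solve_hderiv
  | |- hderiv (fun t => @?u t - @?w t) _ => eapply (hderiv_minus u _ w _); solve_hderiv
  | |- hderiv (fun t => @?u t * @?w t) _ => eapply (hderiv_mult u _ w _); solve_hderiv
  | |- hderiv (fun t => - @?u t) _ => eapply (hderiv_opp u _); solve_hderiv
  | |- hderiv (fun t => cosh (@?u t)) _ =>
      eapply (hderiv_comp cosh sinh u _ derivable_pt_lim_cosh); solve_hderiv
  | |- hderiv (fun t => sinh (@?u t)) _ =>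
      eapply (hderiv_comp sinh cosh u _ derivable_pt_lim_sinh); solve_hderiv
  | |- hderiv (fun t => cos (@?u t)) _ =>
      eapply (hderiv_comp cos (fun y => - sin y) u _ derivable_pt_lim_cos); solve_hderiv
  | |- hderiv (fun t => sin (@?u t)) _ =>
      eapply (hderiv_comp sin cos u _ derivable_pt_lim_sin); solve_hderiv
  end.

Definition hderiv_mat (A A' : R -> mat2) : Prop :=
  hderiv (fun t => m11 (A t)) (fun t => m11 (A' t)) /\
  hderiv (fun t => m12 (A t)) (fun t => m12 (A' t)) /\
  hderiv (fun t => m21 (A t)) (fun t => m21 (A' t)) /\
  hderiv (fun t => m22 (A t)) (fun t => m22 (A' t)).

Lemma hderiv_mat2_vec A A' w : hderiv_mat A A' ->
  hderiv (fun t => fst (mat2_vec (A t) w)) (fun t => fst (mat2_vec (A' t) w)) /\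
  hderiv (fun t => snd (mat2_vec (A t) w)) (fun t => snd (mat2_vec (A' t) w)).
Proof.
  intros [H11 [H12 [H21 H22]]]. unfold mat2_vec; simpl.
  split; (eapply hderiv_eq; [solve_hderiv | intros; cbv beta; ring]).
Qed.

Lemma hderiv_psi s s' mu mu' th th' : hderiv s s' -> hderiv mu mu' -> hderiv th th' ->
  hderiv_mat (fun t => psi (s t) (mu t) (th t))
             (fun t => dpsi (s t) (mu t) (th t) (s' t) (mu' t) (th' t)).
Proof.
  intros Hs Hmu Hth.
  unfold hderiv_mat, psi, dpsi, mat2_add, mat2_scal, rot, refl, drot, drefl; simpl.
  repeat split; (eapply hderiv_eq; [solve_hderiv | intros; cbv beta; ring]).
Qed.

Lemma ex_hderiv_mat A :
  (exists a, hderiv (fun t => m11 (A t)) a) -> (exists b, hderiv (fun t => m12 (A t)) b) ->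
  (exists c, hderiv (fun t => m21 (A t)) c) -> (exists d, hderiv (fun t => m22 (A t)) d) ->
  exists A', hderiv_mat A A'.
Proof.
  intros [a Ha] [b Hb] [c Hc] [d Hd].
  now exists (fun t => Mat2 (a t) (b t) (c t) (d t)).
Qed.

Lemma ex_hderiv_dpsi s s' s'' mu mu' mu'' th th' th'' :
  hderiv s s' -> hderiv mu mu' -> hderiv th th' ->
  hderiv s' s'' -> hderiv mu' mu'' -> hderiv th' th'' ->
  exists A'', hderiv_mat (fun t => dpsi (s t) (mu t) (th t) (s' t) (mu' t) (th' t)) A''.
Proof.
  intros. apply ex_hderiv_mat; eexists;
    unfold dpsi, mat2_add, mat2_scal, rot, refl, drot, drefl; simpl; solve_hderiv.
Qed.

Lemma hderiv_skew_tr_mul A A' A'' : hderiv_mat A A' -> hderiv_mat A' A'' ->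
  hderiv (fun t => skew (mat2_mul (mat2_tr (A t)) (A' t)))
         (fun t => skew (mat2_mul (mat2_tr (A t)) (A'' t))).
Proof.
  intros [H11 [H12 [H21 H22]]] [K11 [K12 [K21 K22]]].
  unfold skew, mat2_mul, mat2_tr; simpl.
  eapply hderiv_eq; [solve_hderiv | intros; cbv beta; ring].
Qed.

Lemma skew_tr_mul_accel_eq0 A A' A'' c : hderiv_mat A A' -> hderiv_mat A' A'' ->
  (forall t, 0 <= t -> skew (mat2_mul (mat2_tr (A t)) (A' t)) = c) ->
  forall t, 0 <= t -> skew (mat2_mul (mat2_tr (A t)) (A'' t)) = 0.
Proof.
  intros HA HA' Hc t Ht.
  apply (hderiv_unique (fun _ => c) (fun t => skew (mat2_mul (mat2_tr (A t)) (A'' t)))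
           (fun _ => 0) t); [| apply hderiv_const | exact Ht].
  apply hderiv_ext with (2 := hderiv_skew_tr_mul A A' A'' HA HA').
  intros u Hu. now split; [apply Hc |].
Qed.

(** * Differential calculus in the plane *)

Lemma dist2_nonneg x y : 0 <= dist2 x y.
Proof. unfold dist2. eapply Rle_trans; [apply Rabs_pos | apply Rmax_l]. Qed.

Lemma Rabs_mult_le x y a b : Rabs x <= a -> Rabs y <= b -> Rabs (x * y) <= a * b.
Proof. intros. rewrite Rabs_mult. apply Rmult_le_compat; auto using Rabs_pos. Qed.

Lemma open2_ext U V : (forall y, U y <-> V y) -> open2 U -> open2 V.
Proof.
  intros E HU x Vx. destruct (HU x (proj2 (E x) Vx)) as [e [He Hb]].
  exists e; split; trivial. intros y Hy. apply E, Hb, Hy.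
Qed.

Definition mat2_norm (N : mat2) : R :=
  Rabs (m11 N) + Rabs (m12 N) + Rabs (m21 N) + Rabs (m22 N).

Lemma dist2_mat2_vec_le N z y :
  dist2 (mat2_vec N z) (mat2_vec N y) <= mat2_norm N * dist2 z y.
Proof.
  destruct z as [z1 z2], y as [y1 y2]. unfold dist2, mat2_vec, mat2_norm; simpl.
  set (d := Rmax (Rabs (z1 - y1)) (Rabs (z2 - y2))).
  assert (D1 : Rabs (z1 - y1) <= d) by apply Rmax_l.
  assert (D2 : Rabs (z2 - y2) <= d) by apply Rmax_r.
  assert (0 <= d) by (eapply Rle_trans; [apply Rabs_pos | exact D1]).
  pose proof (Rabs_pos (m11 N)); pose proof (Rabs_pos (m12 N)).
  pose proof (Rabs_pos (m21 N)); pose proof (Rabs_pos (m22 N)).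
  assert (Row : forall a b, Rabs (a * z1 + b * z2 - (a * y1 + b * y2)) <= (Rabs a + Rabs b) * d).
  { intros a b. replace (a * z1 + b * z2 - (a * y1 + b * y2)) with
      (a * (z1 - y1) + b * (z2 - y2)) by ring.
    eapply Rle_trans; [apply Rabs_triang|].
    pose proof (Rabs_mult_le a (z1 - y1) _ _ (Rle_refl _) D1).
    pose proof (Rabs_mult_le b (z2 - y2) _ _ (Rle_refl _) D2). nra. }
  apply Rmax_lub; eapply Rle_trans; try apply Row; nra.
Qed.

Lemma lipschitz_radius N d : 0 < d ->
  exists r, 0 < r /\ forall z y, dist2 z y < r -> dist2 (mat2_vec N z) (mat2_vec N y) < d.
Proof.
  intros Hd. assert (Hn : 0 <= mat2_norm N)
    by (unfold mat2_norm; pose proof (Rabs_pos (m11 N)); pose proof (Rabs_pos (m12 N));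
        pose proof (Rabs_pos (m21 N)); pose proof (Rabs_pos (m22 N)); lra).
  exists (d / (mat2_norm N + 1)); split; [apply Rdiv_lt_0_compat; lra|].
  intros z y Hzy. eapply Rle_lt_trans; [apply dist2_mat2_vec_le|].
  pose proof (dist2_nonneg z y).
  apply Rmult_lt_compat_r with (r := mat2_norm N + 1) in Hzy; [|lra].
  unfold Rdiv in Hzy. rewrite Rmult_assoc, Rinv_l, Rmult_1_r in Hzy; nra.
Qed.

Lemma open2_preimage_mat2_vec U N : open2 U -> open2 (fun y => U (mat2_vec N y)).
Proof.
  intros HU x Ux. destruct (HU _ Ux) as [e [He Hb]].
  destruct (lipschitz_radius N e He) as [r [Hr Hl]].
  exists r; split; trivial. intros y Hy. apply Hb, Hl, Hy.
Qed.

Lemma cont2_on_comp_mat2_vec U V f N : cont2_on U f ->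
  (forall y, V y -> U (mat2_vec N y)) -> cont2_on V (fun y => f (mat2_vec N y)).
Proof.
  intros Cf HUV x Vx eps He. destruct (Cf _ (HUV x Vx) eps He) as [d [Hd Hf]].
  destruct (lipschitz_radius N d Hd) as [r [Hr Hl]].
  exists r; split; trivial. intros y Vy Hy. apply Hf; auto.
Qed.

Lemma cont2_on_lincomb U f h a b : cont2_on U f -> cont2_on U h ->
  cont2_on U (fun y => a * f y + b * h y).
Proof.
  intros Cf Ch x Ux eps He.
  set (e := eps / (2 * (Rabs a + Rabs b + 1))).
  pose proof (Rabs_pos a); pose proof (Rabs_pos b).
  assert (He' : 0 < e) by (apply Rdiv_lt_0_compat; lra).
  destruct (Cf x Ux e He') as [d1 [Hd1 F1]], (Ch x Ux e He') as [d2 [Hd2 F2]].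
  exists (Rmin d1 d2); split; [now apply Rmin_pos|]. intros y Uy Hy.
  pose proof (F1 y Uy (Rlt_le_trans _ _ _ Hy (Rmin_l _ _))) as B1.
  pose proof (F2 y Uy (Rlt_le_trans _ _ _ Hy (Rmin_r _ _))) as B2.
  replace (a * f y + b * h y - (a * f x + b * h x))
    with (a * (f y - f x) + b * (h y - h x)) by ring.
  eapply Rle_lt_trans; [apply Rabs_triang|].
  pose proof (Rabs_mult_le a _ _ _ (Rle_refl _) (Rlt_le _ _ B1)).
  pose proof (Rabs_mult_le b _ _ _ (Rle_refl _) (Rlt_le _ _ B2)).
  assert (E : (Rabs a + Rabs b) * e < eps).
  { unfold e. apply Rmult_lt_reg_r with (2 * (Rabs a + Rabs b + 1)); [lra|].
    replace ((Rabs a + Rabs b) * (eps / (2 * (Rabs a + Rabs b + 1))) * (2 * (Rabs a + Rabs b + 1)))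
      with ((Rabs a + Rabs b) * eps) by (field; lra). nra. }
  lra.
Qed.

Definition C1_partials (U : R * R -> Prop) (f f1 f2 : R * R -> R) : Prop :=
  (forall x, U x -> partial1 f x (f1 x) /\ partial2 f x (f2 x)) /\
  cont2_on U f1 /\ cont2_on U f2.

Lemma MVT_abs f f' a b :
  (forall c, Rabs (c - a) <= Rabs (b - a) -> derivable_pt_lim f c (f' c)) ->
  exists c, Rabs (c - a) <= Rabs (b - a) /\ f b - f a = f' c * (b - a).
Proof.
  intros H. destruct (Rtotal_order a b) as [Hab|[<-|Hab]].
  - destruct (MVT_cor2 f f' a b Hab) as [c [E Hc]].
    + intros c Hc. apply H. rewrite !Rabs_right; lra.
    + exists c. split; trivial. rewrite !Rabs_right; lra.
  - exists a. split; [lra | ring].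
  - destruct (MVT_cor2 f f' b a Hab) as [c [E Hc]].
    + intros c Hc. apply H. rewrite !Rabs_left1; lra.
    + exists c. split; [rewrite !Rabs_left1; lra | lra].
Qed.

(* Mean value theorem along the horizontal, then the vertical side of a rectangle. *)
Lemma increment_mean_value U f f1 f2 x0 y0 e :
  (forall z, dist2 z (x0, y0) < e -> U z) ->
  (forall z, U z -> partial1 f z (f1 z) /\ partial2 f z (f2 z)) ->
  forall x y, Rabs (x - x0) < e -> Rabs (y - y0) < e ->
  exists cx cy, Rabs (cx - x0) <= Rabs (x - x0) /\ Rabs (cy - y0) <= Rabs (y - y0) /\
    f (x, y) - f (x0, y0) = f1 (cx, y) * (x - x0) + f2 (x0, cy) * (y - y0).
Proof.
  intros HU Hf x y Hx Hy.
  assert (Hball : forall u w, Rabs (u - x0) < e -> Rabs (w - y0) < e -> U (u, w)).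
  { intros u w Hu Hw. apply HU. unfold dist2; simpl. now apply Rmax_Rlt. }
  assert (He : 0 < e) by (pose proof (Rabs_pos (x - x0)); lra).
  destruct (MVT_abs (fun u => f (u, y)) (fun u => f1 (u, y)) x0 x) as [cx [Hcx Ex]].
  { intros c Hc. apply (Hf (c, y)), Hball; lra. }
  destruct (MVT_abs (fun w => f (x0, w)) (fun w => f2 (x0, w)) y0 y) as [cy [Hcy Ey]].
  { intros c Hc. apply (Hf (x0, c)), Hball; [rewrite Rminus_diag, Rabs_R0 |]; lra. }
  exists cx, cy. repeat split; trivial. lra.
Qed.

Lemma C1_differentiable U f f1 f2 p : open2 U -> C1_partials U f f1 f2 -> U p ->
  differentiable_pt_lim (fun x y => f (x, y)) (fst p) (snd p) (f1 p) (f2 p).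
Proof.
  destruct p as [x0 y0]; simpl. intros HO [Hf [C1 C2]] U0 eps.
  destruct (HO _ U0) as [e [He Hb]].
  assert (Heps : 0 < eps / 2) by (pose proof (cond_pos eps); lra).
  destruct (C1 _ U0 _ Heps) as [d1 [Hd1 G1]], (C2 _ U0 _ Heps) as [d2 [Hd2 G2]].
  assert (Hr : 0 < Rmin e (Rmin d1 d2)) by (repeat apply Rmin_pos; trivial).
  exists (mkposreal _ Hr); simpl. intros x y Hx Hy.
  pose proof (Rmin_l e (Rmin d1 d2)); pose proof (Rmin_r e (Rmin d1 d2)).
  pose proof (Rmin_l d1 d2); pose proof (Rmin_r d1 d2).
  destruct (increment_mean_value U f f1 f2 x0 y0 e Hb Hf x y) as [cx [cy [Hcx [Hcy E]]]];
    try lra.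
  assert (B1 : Rabs (f1 (cx, y) - f1 (x0, y0)) < eps / 2).
  { assert (dist2 (cx, y) (x0, y0) < Rmin e (Rmin d1 d2))
      by (unfold dist2; apply Rmax_Rlt; simpl; lra).
    apply G1; [apply Hb|]; lra. }
  assert (B2 : Rabs (f2 (x0, cy) - f2 (x0, y0)) < eps / 2).
  { assert (dist2 (x0, cy) (x0, y0) < Rmin e (Rmin d1 d2))
      by (unfold dist2; apply Rmax_Rlt; simpl; rewrite Rminus_diag, Rabs_R0; lra).
    apply G2; [apply Hb|]; lra. }
  rewrite E.
  replace (f1 (cx, y) * (x - x0) + f2 (x0, cy) * (y - y0) -
           (f1 (x0, y0) * (x - x0) + f2 (x0, y0) * (y - y0)))
    with ((f1 (cx, y) - f1 (x0, y0)) * (x - x0) + (f2 (x0, cy) - f2 (x0, y0)) * (y - y0))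
    by ring.
  eapply Rle_trans; [apply Rabs_triang|].
  pose proof (Rabs_mult_le _ _ _ _ (Rlt_le _ _ B1) (Rmax_l (Rabs (x - x0)) (Rabs (y - y0)))).
  pose proof (Rabs_mult_le _ _ _ _ (Rlt_le _ _ B2) (Rmax_r (Rabs (x - x0)) (Rabs (y - y0)))).
  lra.
Qed.

Lemma partials_comp_C1 U f f1 f2 w a J : open2 U -> C1_partials U f f1 f2 ->
  U (w a) -> jacobian_at w a J ->
  partial1 (fun y => f (w y)) a (f1 (w a) * m11 J + f2 (w a) * m21 J) /\
  partial2 (fun y => f (w y)) a (f1 (w a) * m12 J + f2 (w a) * m22 J).
Proof.
  intros HO Hf Ua [J11 [J12 [J21 J22]]].
  pose proof (C1_differentiable U f f1 f2 (w a) HO Hf Ua) as Df.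
  destruct a as [a1 a2]; unfold partial1, partial2 in *; simpl in *; split.
  - apply derivable_pt_lim_ext with
      (fun u => f (fst (w (u, a2)), snd (w (u, a2)))); [intro; now rewrite <- surjective_pairing|].
    apply (derivable_pt_lim_comp_2d (fun x y => f (x, y))); assumption.
  - apply derivable_pt_lim_ext with
      (fun u => f (fst (w (a1, u)), snd (w (a1, u)))); [intro; now rewrite <- surjective_pairing|].
    apply (derivable_pt_lim_comp_2d (fun x y => f (x, y))); assumption.
Qed.

Lemma jacobian_at_comp U g g11 g12 g21 g22 w a J : open2 U ->
  C1_partials U (fun y => fst (g y)) g11 g12 -> C1_partials U (fun y => snd (g y)) g21 g22 ->
  U (w a) -> jacobian_at w a J ->
  jacobian_at (fun y => g (w y)) a
    (mat2_mul (Mat2 (g11 (w a)) (g12 (w a)) (g21 (w a)) (g22 (w a))) J).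
Proof.
  intros HO H1 H2 Ua HJ.
  destruct (partials_comp_C1 U _ _ _ w a J HO H1 Ua HJ).
  destruct (partials_comp_C1 U _ _ _ w a J HO H2 Ua HJ).
  now repeat split.
Qed.

Lemma jacobian_at_id a : jacobian_at (fun y => y) a mat2_id.
Proof.
  repeat split; unfold partial1, partial2; simpl;
    first [apply derivable_pt_lim_id | apply derivable_pt_lim_const].
Qed.

Lemma derivable_pt_lim_lincomb f h x l1 l2 a b :
  derivable_pt_lim f x l1 -> derivable_pt_lim h x l2 ->
  derivable_pt_lim (fun u => a * f u + b * h u) x (a * l1 + b * l2).
Proof.
  intros Hf Hh. apply derivable_pt_lim_plus with (f1 := fun u => a * f u);
    now apply derivable_pt_lim_scal.
Qed.

Lemma jacobian_at_mat2_vec M f a J : jacobian_at f a J ->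
  jacobian_at (fun y => mat2_vec M (f y)) a (mat2_mul M J).
Proof.
  intros [J11 [J12 [J21 J22]]].
  repeat split; apply derivable_pt_lim_lincomb; assumption.
Qed.

Lemma partials_ext_loc D f h a l1 l2 : open2 D -> D a ->
  (forall y, D y -> f y = h y) -> partial1 f a l1 -> partial2 f a l2 ->
  partial1 h a l1 /\ partial2 h a l2.
Proof.
  intros HO Da E P1 P2. destruct (HO a Da) as [e [He Hb]].
  destruct a as [a1 a2]; unfold partial1, partial2 in *; simpl in *.
  split; [ apply (derivable_pt_lim_locally_ext (fun u => f (u, a2)) _ _ (a1 - e) (a1 + e))
         | apply (derivable_pt_lim_locally_ext (fun u => f (a1, u)) _ _ (a2 - e) (a2 + e)) ];
    trivial; try lra; intros u Hu; apply E, Hb; unfold dist2; simpl;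
    apply Rmax_Rlt; rewrite Rminus_diag, Rabs_R0; split; try apply Rabs_def1; lra.
Qed.

Lemma jacobian_at_ext_loc D f h a J : open2 D -> D a ->
  (forall y, D y -> f y = h y) -> jacobian_at f a J -> jacobian_at h a J.
Proof.
  intros HO Da E [J11 [J12 [J21 J22]]].
  assert (E1 : forall y, D y -> fst (f y) = fst (h y)) by (intros; now rewrite E).
  assert (E2 : forall y, D y -> snd (f y) = snd (h y)) by (intros; now rewrite E).
  destruct (partials_ext_loc D _ _ a _ _ HO Da E1 J11 J12).
  destruct (partials_ext_loc D _ _ a _ _ HO Da E2 J21 J22).
  now repeat split.
Qed.

Lemma jacobian_at_unique f a J K : jacobian_at f a J -> jacobian_at f a K -> J = K.
Proof.
  destruct J, K; intros [J11 [J12 [J21 J22]]] [K11 [K12 [K21 K22]]]; simpl in *.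
  f_equal; eapply uniqueness_limite; eassumption.
Qed.

Lemma jacobian_at_linear N a : jacobian_at (mat2_vec N) a N.
Proof.
  rewrite <- (mat2_mul_id_r N) at 2. exact (jacobian_at_mat2_vec N _ a _ (jacobian_at_id a)).
Qed.

(** * Linear images of diffeomorphisms *)

Lemma C1_on_lincomb U f h a b : C1_on U f -> C1_on U h ->
  C1_on U (fun y => a * f y + b * h y).
Proof.
  intros [f1 [f2 [Hf [Cf1 Cf2]]]] [h1 [h2 [Hh [Ch1 Ch2]]]].
  exists (fun y => a * f1 y + b * h1 y), (fun y => a * f2 y + b * h2 y).
  split; [|split; now apply cont2_on_lincomb].
  intros x Ux. destruct (Hf x Ux), (Hh x Ux).
  split; now apply derivable_pt_lim_lincomb.
Qed.

Lemma C1_on_comp_mat2_vec U V f N : open2 U -> C1_on U f ->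
  (forall y, V y -> U (mat2_vec N y)) -> C1_on V (fun y => f (mat2_vec N y)).
Proof.
  intros HO [f1 [f2 Hf]] HUV.
  exists (fun y => m11 N * f1 (mat2_vec N y) + m21 N * f2 (mat2_vec N y)),
         (fun y => m12 N * f1 (mat2_vec N y) + m22 N * f2 (mat2_vec N y)).
  destruct Hf as [Hp [C1 C2]]. split; [|split].
  - intros y Vy.
    destruct (partials_comp_C1 U f f1 f2 (mat2_vec N) y N) as [P1 P2];
      auto using jacobian_at_linear; [now split|].
    rewrite !(Rmult_comm (m11 N)), !(Rmult_comm (m12 N)),
      !(Rmult_comm (m21 N)), !(Rmult_comm (m22 N)). now split.
  - apply cont2_on_lincomb with (f := fun y => f1 (mat2_vec N y))
      (h := fun y => f2 (mat2_vec N y)); now apply cont2_on_comp_mat2_vec with U.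
  - apply cont2_on_lincomb with (f := fun y => f1 (mat2_vec N y))
      (h := fun y => f2 (mat2_vec N y)); now apply cont2_on_comp_mat2_vec with U.
Qed.

Lemma image2_mat2_vec D v M y : det2 M <> 0 ->
  image2 D (fun x => mat2_vec M (v x)) y <-> image2 D v (mat2_vec (mat2_inv M) y).
Proof.
  intros HM. split; intros [x [Dx E]]; exists x; split; trivial.
  - now rewrite <- E, mat2_vec_inv_l.
  - now rewrite E, mat2_vec_inv_r.
Qed.

Lemma diffeo_onto_image_mat2_vec D v M : det2 M <> 0 -> diffeo_onto_image D v ->
  diffeo_onto_image D (fun x => mat2_vec M (v x)).
Proof.
  intros HM [HO [[Cv1 Cv2] [Inj [HOi [g [Hgv [Hvg [Cg1 Cg2]]]]]]]].
  assert (Him : forall y, image2 D (fun x => mat2_vec M (v x)) y ->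
                          image2 D v (mat2_vec (mat2_inv M) y))
    by (intros y; apply image2_mat2_vec, HM).
  split; [exact HO|]. split; [|split; [|split]].
  - split; now apply C1_on_lincomb.
  - intros x y Dx Dy E. apply Inj; trivial.
    now rewrite <- (mat2_vec_inv_l M (v x)), E, mat2_vec_inv_l.
  - apply open2_ext with (fun y => image2 D v (mat2_vec (mat2_inv M) y)).
    + intros y. symmetry. now apply image2_mat2_vec.
    + now apply open2_preimage_mat2_vec.
  - exists (fun y => g (mat2_vec (mat2_inv M) y)). split; [|split].
    + intros x Dx. now rewrite mat2_vec_inv_l, Hgv.
    + intros y Hy. destruct (Hvg _ (Him y Hy)) as [Dg Eg].
      split; trivial. now rewrite Eg, mat2_vec_inv_r.
    + split; [ apply (C1_on_comp_mat2_vec (image2 D v) _ (fun y => fst (g y)))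
             | apply (C1_on_comp_mat2_vec (image2 D v) _ (fun y => snd (g y))) ]; assumption.
Qed.

Lemma diffeo_jacobian_det_neq0 D v a J : diffeo_onto_image D v -> D a ->
  jacobian_at v a J -> det2 J <> 0.
Proof.
  intros [HO [_ [_ [HOi [g [Hgv [_ [[q1 [q2 Cq]] [r1 [r2 Cr]]]]]]]]]] Da HJ.
  assert (Ua : image2 D v (v a)) by now exists a.
  pose proof (jacobian_at_comp _ g q1 q2 r1 r2 v a J HOi Cq Cr Ua HJ) as HK.
  assert (HI : jacobian_at (fun y => g (v y)) a mat2_id).
  { apply (jacobian_at_ext_loc D (fun y => y)); auto using jacobian_at_id.
    intros y Dy. now rewrite Hgv. }
  pose proof (f_equal det2 (jacobian_at_unique _ _ _ _ HK HI)) as E.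
  rewrite det2_mul in E. unfold mat2_id, det2 at 3 in E; simpl in E.
  intros H0. rewrite H0, Rmult_0_r in E. lra.
Qed.

Lemma diffeo_jacobian D v : diffeo_onto_image D v ->
  exists Jv, forall a, D a -> jacobian_at v a (Jv a).
Proof.
  intros [_ [[[p11 [p12 [Hp1 _]]] [p21 [p22 [Hp2 _]]]] _]].
  exists (fun a => Mat2 (p11 a) (p12 a) (p21 a) (p22 a)). intros a Da.
  destruct (Hp1 a Da), (Hp2 a Da). now repeat split.
Qed.

(** * The pressure *)

Definition qform (S : mat2) (w : R * R) : R :=
  fst w * fst (mat2_vec S w) + snd w * snd (mat2_vec S w).

Lemma derivable_pt_lim_qform S c x d1 d2 : m12 S = m21 S ->
  derivable_pt_lim (fun u => fst (c u)) x d1 -> derivable_pt_lim (fun u => snd (c u)) x d2 ->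
  derivable_pt_lim (fun u => qform S (c u)) x
    (2 * (d1 * fst (mat2_vec S (c x)) + d2 * snd (mat2_vec S (c x)))).
Proof.
  intros HS H1 H2.
  pose proof (derivable_pt_lim_lincomb _ _ _ _ _ (m11 S) (m12 S) H1 H2) as L1.
  pose proof (derivable_pt_lim_lincomb _ _ _ _ _ (m21 S) (m22 S) H1 H2) as L2.
  pose proof (derivable_pt_lim_plus _ _ _ _ _
    (derivable_pt_lim_mult _ _ _ _ _ H1 L1) (derivable_pt_lim_mult _ _ _ _ _ H2 L2)) as Q.
  unfold qform, mat2_vec; simpl.
  replace (2 * (d1 * (m11 S * fst (c x) + m12 S * snd (c x)) +
                d2 * (m21 S * fst (c x) + m22 S * snd (c x))))
    with (d1 * (m11 S * fst (c x) + m12 S * snd (c x)) + fst (c x) * (m11 S * d1 + m12 S * d2) +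
          (d2 * (m21 S * fst (c x) + m22 S * snd (c x)) + snd (c x) * (m21 S * d1 + m22 S * d2)))
    by (rewrite HS; ring).
  exact Q.
Qed.

Lemma pressure_gradient S w a J : m12 S = m21 S -> jacobian_at w a J ->
  exists g1 g2,
    partial1 (fun y => - (1/2) * qform S (w y)) a g1 /\
    partial2 (fun y => - (1/2) * qform S (w y)) a g2 /\
    fst (mat2_vec (mat2_tr J) (mat2_vec S (w a))) + g1 = 0 /\
    snd (mat2_vec (mat2_tr J) (mat2_vec S (w a))) + g2 = 0.
Proof.
  intros HS [J11 [J12 [J21 J22]]]. destruct a as [a1 a2].
  unfold partial1, partial2 in *; simpl in *.
  eexists; eexists; repeat split.
  - apply (derivable_pt_lim_scal (fun u => qform S (w (u, a2)))).
    exact (derivable_pt_lim_qform S (fun u => w (u, a2)) a1 _ _ HS J11 J21).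
  - apply (derivable_pt_lim_scal (fun u => qform S (w (a1, u)))).
    exact (derivable_pt_lim_qform S (fun u => w (a1, u)) a2 _ _ HS J12 J22).
  - unfold mat2_vec, mat2_tr; simpl; field.
  - unfold mat2_vec, mat2_tr; simpl; field.
Qed.

Theorem theorem4p2
  (D : R * R -> Prop) (v : R * R -> R * R)
  (s s1 s2 mu mu1 mu2 th th1 th2 : R -> R) :
  domain2 D ->
  diffeo_onto_image D v ->
  C2_half s s1 s2 -> C2_half mu mu1 mu2 -> C2_half th th1 th2 ->
  (exists c : R, forall t, 0 <= t ->
     (cosh (s t))^2 * mu1 t - (sinh (s t))^2 * th1 t = c) ->
  lagrangian_euler_solution D
    (fun t a => mat2_vec (psi (s t) (mu t) (th t)) (v a)).
Proof.
  intros _ Hv [Hs [Hs1 _]] [Hmu [Hmu1 _]] [Hth [Hth1 _]] [c Hc].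
  set (A := fun t => psi (s t) (mu t) (th t)).
  set (A' := fun t => dpsi (s t) (mu t) (th t) (s1 t) (mu1 t) (th1 t)).
  assert (HA : hderiv_mat A A') by now apply hderiv_psi.
  destruct (ex_hderiv_dpsi s s1 s2 mu mu1 mu2 th th1 th2) as [A'' HA']; trivial.
  assert (Hsym : forall t, 0 <= t -> skew (mat2_mul (mat2_tr (A t)) (A'' t)) = 0).
  { apply (skew_tr_mul_accel_eq0 A A' A'' (2 * c) HA HA').
    intros t Ht. unfold A, A'. now rewrite skew_psi_dpsi, Hc. }
  destruct (diffeo_jacobian D v Hv) as [Jv HJv].
  split.
  - intros t _. apply diffeo_onto_image_mat2_vec; trivial. rewrite det2_psi. lra.
  - exists (fun t a => mat2_mul (A t) (Jv a)),
      (fun t a => mat2_vec (A' t) (v a)), (fun t a => mat2_vec (A'' t) (v a)),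
      (fun t y => - (1/2) * qform (mat2_mul (mat2_tr (A t)) (A'' t)) (v y)).
    split; [|split; [|split; [|split]]].
    + intros t a _ Da. now apply jacobian_at_mat2_vec, HJv.
    + intros t a _ _. now rewrite !det2_mul; unfold A; rewrite !det2_psi.
    + intros a Da. rewrite det2_mul; unfold A; rewrite det2_psi, Rmult_1_l.
      exact (diffeo_jacobian_det_neq0 D v a (Jv a) Hv Da (HJv a Da)).
    + intros a _.
      destruct (hderiv_mat2_vec A A' (v a) HA), (hderiv_mat2_vec A' A'' (v a) HA').
      now repeat split.
    + intros t a Ht Da. rewrite mat2_vec_tr_mul. apply pressure_gradient; auto.
      pose proof (Hsym t Ht) as E. unfold skew in E. lra.
Qed.
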